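(* Let $f$ be a real valued function defined on a subset $D$ of $\mathbb{R}$ and let $x\in D$. The set of sequential cord derivatives of $f$ at $x$ is a closed subset of $\overline{\mathbb{R}}$.
   Context: $\overline{\mathbb{R}}=\mathbb{R}\cup\{\pm\infty\}$. $L\in\overline{\mathbb{R}}$ is a sequential cord derivative of $f$ at $x$ if there are sequences $h_n>0$, $k_n>0$ with $h_n\to0$, $k_n\to0$, $x+h_n\in D$, $x-k_n\in D$ for all $n$, and $\frac{f(x+h_n)-f(x-k_n)}{h_n+k_n}\to L$ as $n\to\infty$. A set $S\subseteq\overline{\mathbb{R}}$ is closed if every $L\in\overline{\mathbb{R}}$ for which there is a sequence of real numbers $L_n\in S\cap\mathbb{R}$ with $L_n\to L$ belongs to $S$. *)

From Stdlib Require Import Reals.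
From Coquelicot Require Export Coquelicot.
Open Scope R_scope.

Definition seq_cord_deriv (D : R -> Prop) (f : R -> R) (x : R) (L : Rbar) : Prop :=
  exists h k : nat -> R,
    (forall n, 0 < h n) /\ (forall n, 0 < k n) /\
    is_lim_seq h 0 /\ is_lim_seq k 0 /\
    (forall n, D (x + h n)) /\ (forall n, D (x - k n)) /\
    is_lim_seq (fun n => (f (x + h n) - f (x - k n)) / (h n + k n)) L.

Definition closed_Rbar (S : Rbar -> Prop) : Prop :=
  forall (L : Rbar) (Ln : nat -> R),
    (forall n, S (Finite (Ln n))) -> is_lim_seq Ln L -> S L.

(* Diagonal argument.  If L_n -> L and each finite L_n is a sequential cord
   derivative, pick for every n one cord (x - k_n, x + h_n) with h_n, k_n < 1/(n+1)
   whose slope is within 1/(n+1) of L_n.  Then h_n, k_n -> 0 and the slopes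
   differ from L_n by a null sequence, so they tend to L. *)

From Stdlib Require Import Reals Lra Lia IndefiniteDescription.
From Coquelicot Require Import Coquelicot.
Open Scope R_scope.

Definition cord_slope (f : R -> R) (x h k : R) : R :=
  (f (x + h) - f (x - k)) / (h + k).

Lemma inv_succ_pos (n : nat) : 0 < / (INR n + 1).
Proof. apply Rinv_0_lt_compat; pose proof (pos_INR n); lra. Qed.

Lemma is_lim_seq_inv_succ : is_lim_seq (fun n => / (INR n + 1)) 0.
Proof.
  assert (Hinf : is_lim_seq (fun n => INR n + 1) p_infty).
  { eapply is_lim_seq_plus.
    - apply is_lim_seq_INR.
    - apply is_lim_seq_const.
    - constructor. }
  apply (is_lim_seq_inv _ _ Hinf); discriminate.
Qed.

Lemma is_lim_seq_le_inv_succ (u : nat -> R) :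
  (forall n, 0 <= u n <= / (INR n + 1)) -> is_lim_seq u 0.
Proof.
  intros Hu.
  apply is_lim_seq_le_le with (u := fun _ => 0) (w := fun n => / (INR n + 1)).
  - exact Hu.
  - apply is_lim_seq_const.
  - apply is_lim_seq_inv_succ.
Qed.

Lemma is_lim_seq_of_diff_0 (u v : nat -> R) (l : Rbar) :
  is_lim_seq u l -> is_lim_seq (fun n => v n - u n) 0 -> is_lim_seq v l.
Proof.
  intros Hu Hdiff.
  apply is_lim_seq_ext with (u := fun n => u n + (v n - u n)).
  { intros n; ring. }
  apply is_lim_seq_plus with (l1 := l) (l2 := Finite 0); [exact Hu | exact Hdiff |].
  destruct l as [r | |]; try constructor.
  unfold is_Rbar_plus; simpl; rewrite Rplus_0_r; reflexivity.
Qed.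

Lemma seq_cord_deriv_approx (D : R -> Prop) (f : R -> R) (x c e : R) :
  seq_cord_deriv D f x (Finite c) -> 0 < e ->
  exists h k, 0 < h < e /\ 0 < k < e /\ D (x + h) /\ D (x - k) /\
    Rabs (cord_slope f x h k - c) < e.
Proof.
  intros (h & k & Hh & Hk & Lh & Lk & Dh & Dk & Lslope) He.
  set (eps := mkposreal e He).
  apply is_lim_seq_spec in Lh, Lk, Lslope.
  destruct (Lh eps) as [N1 H1], (Lk eps) as [N2 H2], (Lslope eps) as [N3 H3].
  set (m := (N1 + N2 + N3)%nat).
  specialize (H1 m ltac:(unfold m; lia)).
  specialize (H2 m ltac:(unfold m; lia)).
  specialize (H3 m ltac:(unfold m; lia)).
  simpl in H1, H2, H3.
  rewrite Rminus_0_r, Rabs_pos_eq in H1, H2 by (apply Rlt_le; auto).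
  exists (h m), (k m).
  repeat split; auto.
Qed.

Section Diagonal.

Variables (D : R -> Prop) (f : R -> R) (x : R) (L : Rbar).
Variables (Ln h k : nat -> R).

Hypothesis HLn : is_lim_seq Ln L.
Hypothesis Hh : forall n, 0 < h n < / (INR n + 1).
Hypothesis Hk : forall n, 0 < k n < / (INR n + 1).
Hypothesis Dh : forall n, D (x + h n).
Hypothesis Dk : forall n, D (x - k n).
Hypothesis Hslope :
  forall n, Rabs (cord_slope f x (h n) (k n) - Ln n) < / (INR n + 1).

Lemma seq_cord_deriv_diagonal : seq_cord_deriv D f x L.
Proof.
  exists h, k; repeat split.
  - intros n; apply Hh.
  - intros n; apply Hk.
  - apply is_lim_seq_le_inv_succ; intros n; specialize (Hh n); lra.
  - apply is_lim_seq_le_inv_succ; intros n; specialize (Hk n); lra.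
  - exact Dh.
  - exact Dk.
  - apply (is_lim_seq_of_diff_0 Ln); [exact HLn |].
    apply is_lim_seq_abs_0, is_lim_seq_le_inv_succ; intros n.
    split; [apply Rabs_pos | apply Rlt_le, Hslope].
Qed.

End Diagonal.

Theorem theorem3p4 (D : R -> Prop) (f : R -> R) (x : R) (Hx : D x) :
  closed_Rbar (seq_cord_deriv D f x).
Proof.
  intros L Ln HS HLn.
  assert (Hcords : forall n, exists hk : R * R,
    0 < fst hk < / (INR n + 1) /\ 0 < snd hk < / (INR n + 1) /\
    D (x + fst hk) /\ D (x - snd hk) /\
    Rabs (cord_slope f x (fst hk) (snd hk) - Ln n) < / (INR n + 1)).
  { intros n.
    destruct (seq_cord_deriv_approx D f x (Ln n) _ (HS n) (inv_succ_pos n))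
      as (h & k & Hcord).
    exists (h, k); exact Hcord. }
  apply functional_choice in Hcords as [hk Hhk].
  apply (seq_cord_deriv_diagonal D f x L Ln (fun n => fst (hk n)) (fun n => snd (hk n)));
    [exact HLn | intros n; apply Hhk ..].
Qed.
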